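(* Let $D$ be a dataset, $\Omega=\{\omega_1,\dots,\omega_k\}$ a finite set of outcomes, $q$ a real-valued quality function with sensitivity $\Delta>0$, and $\varepsilon>0$; let $q_*=\max_i q(D,\omega_i)$. Then the output distributions of Intermediate Algorithm A and Intermediate Algorithm B (defined below) on these inputs are the same.
   Context: $\mathrm{Expo}(\lambda)$ denotes the exponential distribution with rate $\lambda$, density $\lambda e^{-\lambda x}\mathbf{1}[x\ge0]$. Intermediate Algorithm A: compute $q_*$; for each $i=1,\dots,k$ independently set $v_i=q(D,\omega_i)+X_i$ with $X_i\sim\mathrm{Expo}(\varepsilon/(2\Delta))$; let $S=\{i: v_i\ge q_*\}$; return an element of $S$ chosen uniformly at random. Intermediate Algorithm B: compute $q_*$; for each $i=1,\dots,k$ independently set $v_i^\top=\min\{q_*,\,q(D,\omega_i)+X_i\}$ with $X_i\sim\mathrm{Expo}(\varepsilon/(2\Delta))$ and draw $z_i\sim\mathrm{Expo}(\varepsilon/(2\Delta))$ (all these random variables independent); let $S'=\{i: v_i^\top=q_*\}$; return $\arg\max_{i\in S'}(v_i^\top+z_i)$ (ties occur with probability zero). *)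

From HB Require Import structures.
From mathcomp Require Import all_boot all_order all_algebra.
From mathcomp Require Import all_classical all_reals all_analysis.
Set Implicit Arguments. Unset Strict Implicit. Unset Printing Implicit Defensive.
Import Order.TTheory GRing.Theory Num.Theory.
Local Open Scope ring_scope.

(* Expectation of F(X_0,...,X_{n-1}) where X_0,...,X_{n-1} are i.i.d.
   Expo(rate), written as iterated Lebesgue integrals against the density
   exponential_pdf rate x = rate * exp(-rate x) 1[x >= 0]  (library).
   Noise vectors are represented as functions nat -> R (only the first n
   coordinates matter). *)
Fixpoint expo_expect {R : realType} (rate : R) (n : nat)
  (F : (nat -> R) -> \bar R) : \bar R :=
  match n with
  | 0 => F (fun _ => 0)
  | n'.+1 => (\int[lebesgue_measure]_x
        ((exponential_pdf rate x)%:E *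
          expo_expect rate n' (fun g => F (fun j => if j == n' then x else g j))))%E
  end.

Definition has_sensitivity {Data Out : Type} {R : realType}
  (nbr : Data -> Data -> Prop) (q : Data -> Out -> R) (Delta : R) : Prop :=
  forall D D' w, nbr D D' -> `|q D w - q D' w| <= Delta.

Definition is_max_quality {R : realType} {k : nat} (qv : 'I_k -> R) (qs : R) :=
  (forall i, qv i <= qs) /\ (exists i, qv i = qs).

Definition algA_prob {R : realType} {k : nat} (lam : R) (qv : 'I_k -> R)
  (qs : R) (i : 'I_k) : \bar R :=
  expo_expect lam k (fun X =>
    let S := [set j : 'I_k | qs <= qv j + X (val j)] in
    if i \in S then ((#|S|%:R)^-1)%:E else 0%E).

(* Probability that Intermediate Algorithm B outputs index i:
   vT_j = min(q_*, q_j + X_j), S' = {j : vT_j = q_*}, output the argmax over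
   S' of vT_j + z_j (ties, a null event, broken towards the smallest index). *)
Definition algB_prob {R : realType} {k : nat} (lam : R) (qv : 'I_k -> R)
  (qs : R) (i : 'I_k) : \bar R :=
  expo_expect lam k (fun X => expo_expect lam k (fun Z =>
    let vT := fun j : 'I_k => Num.min qs (qv j + X (val j)) in
    let inS' := fun j : 'I_k => vT j == qs in
    let sc := fun j : 'I_k => vT j + Z (val j) in
    if inS' i && [forall j, inS' j ==>
          ((sc j < sc i) || ((sc j == sc i) && (i <= j)%N))]
    then 1%E else 0%E)).

From HB Require Import structures.
From mathcomp Require Import all_boot all_order all_algebra.
From mathcomp Require Import all_classical all_reals all_analysis.
From mathcomp Require Import measurable_realfun ring.
Import Order.TTheory GRing.Theory Num.Theory.
Import numFieldTopology.Exports.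

Local Open Scope classical_set_scope.
Local Open Scope ring_scope.

(* Given the noise X, both algorithms select from S = {j | q_j + X_j >= q_*}:
   A uniformly, and B by the argmax over S of fresh noise z, since capping at q_*
   makes all the capped scores in S equal. So it suffices that i is the argmax of
   i.i.d. Expo(lam) variables Z_j, j in S, with probability 1/|S|. With F the
   CDF, integrate the coordinates in order: those j < i must fall strictly below
   Z_i; once Z_i itself is integrated, with c indices of S among the integrated
   coordinates, the probability that i wins given the maximum T of the remaining
   Z_j, j in S, is (1 - F(T)^c)/c. Each step integrates a polynomial in F(x)
   against the density, which the substitution u = F(x) turns into an FTC. *)

Section polynomial_derivatives.
Context {R : realType}.

Lemma is_derive_exprS_div (u : R) (a : nat) :
  is_derive u 1 (fun v : R => v ^+ a.+1 / a.+1%:R) (u ^+ a).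
Proof.
have := is_deriveZ (a.+1%:R^-1 : R) (is_deriveX a.+1 (is_derive_id u (1:R))).
rewrite [X in is_derive _ _ X _](_ : _ = fun v : R => v ^+ a.+1 / a.+1%:R).
  move/is_derive_eq; apply.
  by rewrite scalerA mulrA mulVf ?pnatr_eq0// mul1r; exact: mulr1.
by apply/funext => v; rewrite /= exprfctE /= mulrC.
Qed.

Lemma is_derive_sub_exprS_div (u : R) (b : nat) :
  is_derive u 1 (fun v : R => (v - v ^+ b.+1 / b.+1%:R) / b%:R)
    ((1 - u ^+ b) / b%:R).
Proof.
have := is_deriveZ (b%:R^-1 : R)
  (is_deriveB (is_derive_id u (1:R)) (is_derive_exprS_div u b)).
rewrite [X in is_derive _ _ X _]
  (_ : _ = fun v : R => (v - v ^+ b.+1 / b.+1%:R) / b%:R).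
  by move/is_derive_eq; apply; rewrite /GRing.scale /= mulrC.
by apply/funext => v; rewrite /= mulrC.
Qed.

End polynomial_derivatives.

Section exponential_cdf.
Context {R : realType}.
Local Notation mu := lebesgue_measure.
Variable lam : R.

(* The CDF of Expo(lam) on [0, +oo[ only: it is negative on ]-oo, 0[, whence
   the [Num.max _ 0] below. *)
Definition expo_cdf (x : R) : R := 1 - expR (- lam * x).

Lemma expo_cdf0 : expo_cdf 0 = 0.
Proof. by rewrite /expo_cdf mulr0 expR0 subrr. Qed.

Lemma expo_cdf_le1 (x : R) : expo_cdf x <= 1.
Proof. by rewrite /expo_cdf lerBlDr lerDl expR_ge0. Qed.

Lemma one_sub_expo_cdf (x : R) : 1 - expo_cdf x = expR (- lam * x).
Proof. by rewrite /expo_cdf opprB addrC subrK. Qed.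

Lemma is_derive_expo_cdf (x : R) :
  is_derive x 1 expo_cdf (lam * expR (- lam * x)).
Proof.
have := is_deriveB (is_derive_cst (1 : R) x 1)
  (is_derive1_comp (is_derive_expR (- lam * x))
     (is_deriveZ (- lam) (is_derive_id x (1 : R)))).
rewrite [X in is_derive _ _ X _](_ : _ = expo_cdf); last by apply/funext.
move/is_derive_eq; apply.
by rewrite /GRing.scale /= mulr1 sub0r mulrN opprK mulrC.
Qed.

Lemma continuous_expo_cdf : continuous expo_cdf.
Proof.
move=> x; apply: differentiable_continuous; apply/derivable1_diffP.
by case: (is_derive_expo_cdf x).
Qed.

Hypothesis lam_gt0 : 0 < lam.

Lemma expo_cdf_ge0 (x : R) : 0 <= x -> 0 <= expo_cdf x.
Proof.
by move=> x0; rewrite /expo_cdf subr_ge0 expR_le1 mulNr oppr_le0 mulr_ge0// ltW.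
Qed.

Lemma exponential_pdf_cdf (x : R) :
  0 <= x -> exponential_pdf lam x = lam * (1 - expo_cdf x).
Proof. by move=> x0; rewrite exponential_pdfE// one_sub_expo_cdf. Qed.

Lemma expo_cdf_cvgy : expo_cdf x @[x --> +oo] --> (1 : R).
Proof.
rewrite -[X in _ --> X]subr0; apply: cvgB; first exact: cvg_cst.
rewrite (_ : (fun x => expR (- lam * x)) =
             (fun z => expR (- z)) \o (fun z => lam * z)); last first.
  by apply: eq_fun => x; rewrite mulNr.
apply: (@cvg_comp _ _ _ _ _ _ (pinfty_nbhs R)); last exact: cvgr_expR.
exact: gt0_cvgMry.
Qed.

Lemma integral_exponential_pdf_comp_cdf (T : R) (Phi phi : R -> R) :
  0 <= T -> (forall u : R, is_derive u 1 Phi (phi u)) -> continuous phi ->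
  (forall u, 0 <= u <= 1 -> 0 <= phi u) ->
  (\int[mu]_(x in `[T, +oo[) (exponential_pdf lam x * phi (expo_cdf x))%:E
   = (Phi 1 - Phi (expo_cdf T))%:E)%E.
Proof.
move=> T0 dPhi cphi phi0.
have cPhi : continuous Phi.
  move=> u; apply: differentiable_continuous; apply/derivable1_diffP.
  by case: (dPhi u).
pose f x := phi (expo_cdf x) * (lam * (1 - expo_cdf x)).
transitivity (\int[mu]_(x in `[T, +oo[) (f x)%:E)%E.
  apply: eq_integral => x; rewrite inE /= in_itv /= andbT => Tx.
  by rewrite exponential_pdf_cdf ?(le_trans T0)// mulrC.
rewrite EFinB; apply: (@ge0_continuous_FTC2y _ f (Phi \o expo_cdf)).
- move=> x Tx; have x0 : 0 <= x by exact: le_trans Tx.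
  rewrite mulr_ge0 ?phi0 ?expo_cdf_le1 ?expo_cdf_ge0//.
  by rewrite mulr_ge0 ?subr_ge0 ?expo_cdf_le1// ltW.
- apply: continuous_subspaceT => x.
  have -> : f = (phi \o expo_cdf) \* (cst lam \* (cst 1 - expo_cdf)).
    by apply/funext.
  apply: continuousM.
    exact: continuous_comp (continuous_expo_cdf x) (cphi _).
  apply: continuousM; first exact: cst_continuous.
  by apply: continuousB; [exact: cst_continuous | exact: continuous_expo_cdf].
- exact: continuous_cvg (cPhi _) expo_cdf_cvgy.
- move=> x _.
  by case: (is_derive1_comp (dPhi (expo_cdf x)) (is_derive_expo_cdf x)).
- exact/cvg_at_right_filter/(continuous_comp (continuous_expo_cdf T) (cPhi _)).
- move=> x _; rewrite derive1E.
  have := is_derive1_comp (dPhi (expo_cdf x)) (is_derive_expo_cdf x).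
  by move=> H; rewrite derive_val /f one_sub_expo_cdf.
Qed.

Let pdf_ge0 (x : R) : 0 <= exponential_pdf lam x.
Proof. exact/exponential_pdf_ge0/ltW. Qed.

Let measurable_pdf : measurable_fun [set: R] (EFin \o exponential_pdf lam).
Proof. by apply/measurable_EFinP; exact: measurable_exponential_pdf. Qed.

Lemma integral_exponential_pdf_itvcy (T : R) : 0 <= T ->
  (\int[mu]_(x in `[T, +oo[) (exponential_pdf lam x)%:E = (1 - expo_cdf T)%:E)%E.
Proof.
move=> T0; have := @integral_exponential_pdf_comp_cdf T id (cst 1) T0
  (fun u => is_derive_id u 1) (@cst_continuous R R 1) (fun _ _ => ler01).
by under eq_integral do rewrite /= mulr1.
Qed.

Lemma integral_exponential_pdf_itvNyo (T : R) : 0 <= T ->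
  (\int[mu]_(x in `]-oo, T[) (exponential_pdf lam x)%:E = (expo_cdf T)%:E)%E.
Proof.
move=> T0; have := integral_exponential_pdf lam_gt0.
rewrite -(setvU `[T, +oo[%classic) ge0_integral_setU//=; last 4 first.
- exact: measurableC.
- by rewrite setvU; exact: measurable_pdf.
- by move=> x _; rewrite lee_fin pdf_ge0.
- exact/disj_setPCr.
rewrite setCitvr integral_exponential_pdf_itvcy//.
move/(congr1 (fun z => z - (1 - expo_cdf T)%:E)%E); rewrite addeK// => ->.
by rewrite -EFinB opprB addrC subrK.
Qed.

Lemma integral_exponential_pdf_cst (r : R) : 0 <= r ->
  (\int[mu]_x ((exponential_pdf lam x)%:E * r%:E) = r%:E)%E.
Proof.
move=> r0; rewrite ge0_integralZr//.
  by rewrite integral_exponential_pdf// mul1e.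
by move=> x _; rewrite lee_fin.
Qed.

Lemma integral_exponential_pdf_lt (c r : R) : 0 <= r ->
  (\int[mu]_x ((exponential_pdf lam x)%:E * (if x < c then r else 0)%:E)
   = (r * expo_cdf (Num.max c 0))%:E)%E.
Proof.
move=> r0; have [c0|c0] := leP c 0.
  rewrite expo_cdf0 mulr0; apply: integral0_eq => x _.
  case: ltP => xc; last by rewrite mule0.
  by rewrite lt0_exponential_pdf ?mul0e// (lt_le_trans xc).
transitivity (\int[mu]_(x in `]-oo, c[) ((exponential_pdf lam x)%:E * r%:E))%E.
  rewrite [RHS]integral_mkcond; apply: eq_integral => x _.
  by rewrite patchE mem_setE in_itv /=; case: ifPn => //; rewrite mule0.
rewrite ge0_integralZr//=.
- by rewrite integral_exponential_pdf_itvNyo ?ltW// -EFinM mulrC.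
- exact: measurable_funTS measurable_pdf.
- by move=> x _; rewrite lee_fin.
Qed.

Lemma integral_exponential_pdf_ge (T : R) (a : nat) : 0 <= T ->
  (\int[mu]_x ((exponential_pdf lam x)%:E *
                 (if T <= x then expo_cdf x ^+ a else 0)%:E)
   = ((1 - expo_cdf T ^+ a.+1) / a.+1%:R)%:E)%E.
Proof.
move=> T0.
transitivity (\int[mu]_(x in `[T, +oo[)
                (exponential_pdf lam x * expo_cdf x ^+ a)%:E)%E.
  rewrite [RHS]integral_mkcond; apply: eq_integral => x _.
  by rewrite patchE mem_setE in_itv /= andbT; case: ifPn => //; rewrite mule0.
rewrite (@integral_exponential_pdf_comp_cdf T _ _ T0
  (fun u => is_derive_exprS_div u a)).
- by rewrite expr1n mulrBl.
- exact: exprn_continuous.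
- by move=> u /andP[u0 _]; exact: exprn_ge0.
Qed.

Lemma integral_exponential_pdf_comp_cdf_max (T : R) (Phi phi : R -> R) :
  0 <= T -> (forall u : R, is_derive u 1 Phi (phi u)) -> continuous phi ->
  (forall u, 0 <= u <= 1 -> 0 <= phi u) ->
  (\int[mu]_x (exponential_pdf lam x * phi (expo_cdf (Num.max x T)))%:E
   = (expo_cdf T * phi (expo_cdf T) + (Phi 1 - Phi (expo_cdf T)))%:E)%E.
Proof.
move=> T0 dPhi cphi phi0.
have phiF0 x : 0 <= x -> 0 <= phi (expo_cdf x).
  by move=> x0; rewrite phi0// expo_cdf_le1 expo_cdf_ge0.
rewrite -(setvU `[T, +oo[%classic) ge0_integral_setU//=; last 4 first.
- exact: measurableC.
- rewrite setvU; apply/measurable_EFinP; apply: measurable_funM.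
    exact: measurable_exponential_pdf.
  apply: continuous_measurable_fun.
  rewrite (_ : (fun x => _) = phi \o (expo_cdf \o (id \max cst T)))//.
  move=> x; apply: continuous_comp; last exact: cphi.
  apply: continuous_comp; last exact: continuous_expo_cdf.
  by apply: continuous_max; [exact: cvg_id | exact: cst_continuous].
- by move=> x _; rewrite lee_fin mulr_ge0// phiF0// le_max T0 orbT.
- exact/disj_setPCr.
rewrite setCitvr.
transitivity (\int[mu]_(x in `]-oo, T[)
                 ((exponential_pdf lam x)%:E * (phi (expo_cdf T))%:E) +
              \int[mu]_(x in `[T, +oo[)
                 (exponential_pdf lam x * phi (expo_cdf x))%:E)%E.
  congr (_ + _)%E; apply: eq_integral => x; rewrite inE /= in_itv /=.
    by move=> xT; rewrite max_r ?ltW.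
  by rewrite andbT => Tx; rewrite max_l.
rewrite ge0_integralZr//=.
- by rewrite integral_exponential_pdf_itvNyo// integral_exponential_pdf_comp_cdf.
- exact: measurable_funTS measurable_pdf.
- by move=> x _; rewrite lee_fin.
- by rewrite lee_fin phiF0.
Qed.

Lemma integral_exponential_pdf_max (T : R) (b : nat) : 0 <= T -> (0 < b)%N ->
  (\int[mu]_x ((exponential_pdf lam x)%:E *
                 ((1 - expo_cdf (Num.max x T) ^+ b) / b%:R)%:E)
   = ((1 - expo_cdf T ^+ b.+1) / b.+1%:R)%:E)%E.
Proof.
move=> T0 b0; under eq_integral do rewrite -EFinM.
rewrite (@integral_exponential_pdf_comp_cdf_max T _ _ T0
  (fun u => is_derive_sub_exprS_div u b)).
- congr EFin; rewrite expr1n -[b.+1]addn1 natrD exprD expr1.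
  have bN0 : (b%:R : R) != 0 by rewrite pnatr_eq0 -lt0n.
  have bS0 : (b%:R + 1%:R : R) != 0 by rewrite -natrD pnatr_eq0 addn1.
  by field; rewrite bN0 bS0.
- rewrite (_ : (fun u => _) = (cst 1 - (@GRing.exp R)^~ b) \* cst b%:R^-1)//.
  move=> u; apply: continuousM; last exact: cst_continuous.
  by apply: continuousB; [exact: cst_continuous | exact: exprn_continuous].
- by move=> u /andP[u0 u1]; rewrite divr_ge0// subr_ge0 exprn_ile1.
Qed.

End exponential_cdf.

(* [expo_expect lam n.+1] integrates coordinate [n] outermost; [splice n g t]
   keeps the coordinates [>= n], already integrated out, at their values in
   [t]. *)
Definition splice {T : Type} (n : nat) (g t : nat -> T) : nat -> T :=
  fun j => if (j < n)%N then g j else t j.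

Definition update {T : Type} (t : nat -> T) (n : nat) (x : T) : nat -> T :=
  fun j => if j == n then x else t j.

Lemma splice0 {T : Type} (g t : nat -> T) : splice 0 g t = t.
Proof. by apply/funext. Qed.

Section expo_expect_lemmas.
Context {R : realType}.
Variable lam : R.

Lemma expo_expect0 n : expo_expect lam n (fun _ => 0%E) = 0%E.
Proof.
elim: n => [//|n IH] /=; rewrite IH.
by apply: integral0_eq => x _; rewrite mule0.
Qed.

Lemma expo_expect_splice n (G : (nat -> R) -> \bar R) (t : nat -> R) :
  expo_expect lam n.+1 (fun g => G (splice n.+1 g t)) =
  (\int[lebesgue_measure]_x ((exponential_pdf lam x)%:E *
      expo_expect lam n (fun g => G (splice n g (update t n x)))))%E.
Proof.
apply: eq_integral => x _; congr (_ * _)%E.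
congr (expo_expect _ _ _); apply/funext => g; congr G; apply/funext => j.
by rewrite /splice /update ltnS; case: ltngtP.
Qed.

End expo_expect_lemmas.

Lemma count_iotaSr (P : pred nat) n :
  count P (iota 0 n.+1) = (count P (iota 0 n) + P n)%N.
Proof. by rewrite -addn1 iotaD count_cat /= addn0. Qed.

Lemma count_iota_gt0 {P : pred nat} {i n : nat} :
  P i -> (i < n)%N -> (0 < count P (iota 0 n))%N.
Proof.
by move=> Pi lt_in; rewrite -has_count; apply/hasP; exists i; rewrite ?mem_iota.
Qed.

Lemma bigmax0_le_all {R : realType} (P : pred nat) (t : nat -> R) s x :
  0 <= x ->
  (\big[Num.max/0]_(j <- s | P j) t j <= x) =
  all (fun j => P j ==> (t j <= x)) s.
Proof.
move=> x0; elim: s => [|a s IH]; first by rewrite big_nil x0.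
by rewrite big_cons /=; case: ifPn => _ //=; rewrite ge_max IH.
Qed.

Section first_argmax.
Context {R : realType}.
Variables (k i : nat) (P : pred nat).

Definition loses_to (j : nat) (y c : R) : bool :=
  (y < c) || ((y == c) && (i <= j)%N).

Definition first_argmax (Z : nat -> R) : bool :=
  all (fun j => P j ==> loses_to j (Z j) (Z i)) (iota 0 k).

Definition max_score_from (n : nat) (t : nat -> R) : R :=
  \big[Num.max/0]_(j <- iota n (k - n) | P j) t j.

Lemma max_score_from_ge0 n t : 0 <= max_score_from n t.
Proof. exact: bigmax_ge_id. Qed.

Lemma max_score_from_update n t x : (n < k)%N ->
  max_score_from n (update t n x) =
  if P n then Num.max x (max_score_from n.+1 t) else max_score_from n.+1 t.
Proof.
move=> lt_nk; rewrite /max_score_from -(subnSK lt_nk) /= big_cons.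
rewrite {1}/update eqxx.
suff -> : \big[Num.max/0]_(j <- iota n.+1 (k - n.+1) | P j) update t n x j =
          \big[Num.max/0]_(j <- iota n.+1 (k - n.+1) | P j) t j by [].
rewrite big_seq_cond [RHS]big_seq_cond; apply: eq_bigr => j /andP[+ _].
by rewrite mem_iota => /andP[lt_nj _]; rewrite /update (gtn_eqF lt_nj).
Qed.

Variable lam : R.
Hypotheses (lam_gt0 : 0 < lam) (lt_ik : (i < k)%N).

Local Notation win G := (if G then 1 else 0)%E.

Lemma expo_expect_first_argmax_below n t : (n <= i)%N ->
  expo_expect lam n (fun g => win (first_argmax (splice n g t))) =
  (if all (fun j => P j ==> loses_to j (t j) (t i)) (iota n (k - n))
   then expo_cdf lam (Num.max (t i) 0) ^+ count P (iota 0 n) else 0)%:E.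
Proof.
elim: n t => [|n IH] t le_ni.
  by rewrite /= splice0 /first_argmax subn0 expr0; case: all.
have lt_ni : (n < i)%N by [].
have lt_nk : (n < k)%N := ltn_trans lt_ni lt_ik.
rewrite (expo_expect_splice _ _ (fun Z => win (first_argmax Z))).
under eq_integral => x _.
  rewrite IH ?(ltnW lt_ni)// -(subnSK lt_nk) /=.
  rewrite (@eq_in_all _ _ (fun j => P j ==> loses_to j (t j) (t i))); last first.
    move=> j; rewrite mem_iota => /andP[lt_nj _].
    by rewrite /update (gtn_eqF lt_nj) (gtn_eqF lt_ni).
  rewrite /update eqxx (gtn_eqF lt_ni).
  rewrite {1}/loses_to (leqNgt i n) lt_ni andbF orbF.
  over.
rewrite count_iotaSr.
have cdf0 : 0 <= expo_cdf lam (Num.max (t i) 0) ^+ count P (iota 0 n).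
  by rewrite exprn_ge0// expo_cdf_ge0// le_max lexx orbT.
case: all; last first.
  by under eq_integral do rewrite andbF; exact: integral_exponential_pdf_cst.
case: (P n) => /=.
  under eq_integral do rewrite andbT.
  by rewrite integral_exponential_pdf_lt// addn1 exprSr.
by rewrite integral_exponential_pdf_cst// addn0.
Qed.

Hypothesis P_i : P i.

Lemma expo_expect_first_argmax_at t :
  expo_expect lam i.+1 (fun g => win (first_argmax (splice i.+1 g t))) =
  ((1 - expo_cdf lam (max_score_from i.+1 t) ^+ count P (iota 0 i.+1))
     / (count P (iota 0 i.+1))%:R)%:E.
Proof.
rewrite (expo_expect_splice _ _ (fun Z => win (first_argmax Z))).
transitivity (\int[lebesgue_measure]_x ((exponential_pdf lam x)%:E *
    (if max_score_from i.+1 t <= x then expo_cdf lam x ^+ count P (iota 0 i)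
     else 0)%:E))%E.
  apply: eq_integral => x _.
  rewrite expo_expect_first_argmax_below// -(subnSK lt_ik) /=.
  rewrite (@eq_in_all _ _ (fun j => P j ==> (t j <= x))); last first.
    move=> j; rewrite mem_iota => /andP[lt_ij _].
    rewrite /update (gtn_eqF lt_ij) eqxx /loses_to (ltnW lt_ij) andbT.
    by rewrite le_eqVlt orbC.
  rewrite /update eqxx /loses_to eqxx leqnn orbT implybT /=.
  have [x_lt0|x_ge0] := ltP x 0; first by rewrite lt0_exponential_pdf// !mul0e.
  by rewrite /max_score_from bigmax0_le_all.
rewrite integral_exponential_pdf_ge ?max_score_from_ge0//.
by rewrite count_iotaSr P_i addn1.
Qed.

Lemma expo_expect_first_argmax_above n t : (i < n)%N -> (n <= k)%N ->
  expo_expect lam n (fun g => win (first_argmax (splice n g t))) =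
  ((1 - expo_cdf lam (max_score_from n t) ^+ count P (iota 0 n))
     / (count P (iota 0 n))%:R)%:E.
Proof.
elim: n t => [//|n IH] t; rewrite ltnS leq_eqVlt => /predU1P[<- _|lt_in lt_nk].
  exact: expo_expect_first_argmax_at.
rewrite (expo_expect_splice _ _ (fun Z => win (first_argmax Z))).
under eq_integral do rewrite IH ?(ltnW lt_nk)// max_score_from_update//.
have cnt_gt0 := count_iota_gt0 P_i lt_in.
rewrite count_iotaSr; case: (P n) => /=.
  by rewrite integral_exponential_pdf_max ?max_score_from_ge0// addn1.
rewrite addn0 integral_exponential_pdf_cst// divr_ge0// subr_ge0.
by rewrite exprn_ile1 ?expo_cdf_le1 ?expo_cdf_ge0 ?max_score_from_ge0.
Qed.

Lemma expo_expect_first_argmax :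
  expo_expect lam k (fun Z => win (first_argmax Z)) =
  ((count P (iota 0 k))%:R^-1)%:E.
Proof.
have := expo_expect_first_argmax_above k (fun _ => 0) lt_ik (leqnn k).
rewrite /max_score_from subnn big_nil expo_cdf0 expr0n.
rewrite eqn0Ngt (count_iota_gt0 P_i lt_ik) /= subr0 div1r => <-.
congr (expo_expect _ _ _); apply/funext => g; congr (if _ then _ else _).
apply: eq_in_all => j; rewrite mem_iota => /andP[_ lt_jk].
by rewrite /splice lt_jk lt_ik.
Qed.

End first_argmax.

Lemma card_set_ord_val k (p : pred nat) :
  #|[set j : 'I_k | p (val j)]%SET| = count p (iota 0 k).
Proof.
by rewrite cardsE cardE /enum_mem size_filter -enumT -val_enum_ord count_map.
Qed.

Lemma forall_ord_all_iota k (p : pred nat) :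
  [forall j : 'I_k, p (val j)] = all p (iota 0 k).
Proof.
apply/forallP/allP => [p_ord j | p_iota j].
  by rewrite mem_iota => /andP[_ lt_jk]; exact: (p_ord (Ordinal lt_jk)).
by apply: p_iota; rewrite mem_iota add0n ltn_ord.
Qed.

Theorem lemma2 (R : realType) (Data Out : Type) (nbr : Data -> Data -> Prop)
  (D : Data) (k : nat) (omega : 'I_k -> Out) (q : Data -> Out -> R)
  (Delta eps qs : R) :
  (0 < k)%N -> 0 < Delta -> has_sensitivity nbr q Delta -> 0 < eps ->
  is_max_quality (fun i => q D (omega i)) qs ->
  forall i : 'I_k,
    algA_prob (eps / (2 * Delta)) (fun j => q D (omega j)) qs i =
    algB_prob (eps / (2 * Delta)) (fun j => q D (omega j)) qs i.
Proof.
move=> _ Delta_gt0 _ eps_gt0 _ i.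
have : 0 < eps / (2 * Delta) by rewrite divr_gt0// mulr_gt0.
move: (eps / (2 * Delta)) => lam lam_gt0.
rewrite /algA_prob /algB_prob; congr (expo_expect _ _ _); apply/funext => X /=.
pose S n := if insub n is Some j then qs <= q D (omega j) + X n else false.
have S_ord (j : 'I_k) : S j = (qs <= q D (omega j) + X j) by rewrite /S valK.
rewrite (_ : (fun Z => _) =
    fun Z => if S i then (if first_argmax k i S Z then 1 else 0) else 0)%E.
  rewrite (_ : [set j | _]%SET = [set j : 'I_k | S (val j)]%SET); last first.
    by apply/setP => j; rewrite !inE S_ord.
  rewrite inE card_set_ord_val; case: ifP => S_i.
    by rewrite expo_expect_first_argmax.
  by rewrite expo_expect0.
have capE (j : 'I_k) : S j -> Num.min qs (q D (omega j) + X j) = qs.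
  by rewrite S_ord => /min_l.
apply/funext => Z; rewrite eq_minl -S_ord; case: (boolP (S i)) => //= S_i.
rewrite capE// /first_argmax -forall_ord_all_iota.
congr (if _ then _ else _); apply: eq_forallb => j.
rewrite eq_minl -S_ord; case: (boolP (S j)) => //= S_j.
by rewrite capE// ltrD2l (inj_eq (addrI qs)).
Qed.
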